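(* Let $G$ be an edge-colored graph. Then $G$ contains a spanning bipartite subgraph $H$ such that $2d_{H}^{c}(v)+3d_{H}(v)\geq d_G^{c}(v)+d_G(v)$ for every vertex $v\in V(H)$.
   Context: An edge-colored graph is a finite simple graph $G$ with a map $C:E(G)\to\mathbb{N}$; subgraphs inherit the coloring. For a subgraph $H$ and $v\in V(H)$, $d_H(v)$ is the degree of $v$ in $H$ and $d_H^c(v)$ is the number of distinct colors on edges of $H$ incident to $v$. *)

From mathcomp Require Import all_boot.
Set Implicit Arguments. Unset Strict Implicit. Unset Printing Implicit Defensive.

(* A finite simple graph on vertex type T is given by its edge set
   E : {set {set T}}, each edge being a 2-element subset of T.
   Subgraphs on the same vertex set (spanning subgraphs) are given by
   subsets F of E.  An edge coloring is a map C : {set T} -> nat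
   (only its values on edges matter); subgraphs inherit it. *)

Definition simple_graph (T : finType) (E : {set {set T}}) : Prop :=
  forall e, e \in E -> #|e| = 2.

Definition inc_edges (T : finType) (F : {set {set T}}) (v : T) : {set {set T}} :=
  [set e in F | v \in e].

Definition deg (T : finType) (F : {set {set T}}) (v : T) : nat :=
  #|inc_edges F v|.

Definition cdeg (T : finType) (C : {set T} -> nat) (F : {set {set T}}) (v : T) : nat :=
  size (undup [seq C e | e <- enum (inc_edges F v)]).

Definition bipartite (T : finType) (F : {set {set T}}) : Prop :=
  exists A : {set T}, forall e, e \in F -> #|e :&: A| = 1 /\ #|e :\: A| = 1.

From mathcomp Require Import all_boot.
From mathcomp Require Import zify.
Set Implicit Arguments. Unset Strict Implicit.

(* Let H be the cut of a bipartition A maximising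
     Phi(A) = sum_u d^c_H(u) + |E(H)|.
   Moving a vertex v to the other side replaces the cut edges at v by the
   uncut ones, so |E(H)| grows by d_G(v) - 2 d_H(v); every other vertex u
   loses at most the colours of the edges uv removed, i.e. at most d_H(v) in
   total; and v afterwards sees at least d^c_G(v) - d^c_H(v) colours.
   Maximality of Phi turns these three estimates into the inequality at v. *)

Lemma card_set2I (T : finType) (x y : T) (A : {set T}) : x != y ->
  #|[set x; y] :&: A| = (x \in A) + (y \in A).
Proof.
move=> xy; rewrite -sum1_card (eq_bigl (fun z => (z \in [set x; y]) && (z \in A))).
  by rewrite big_mkcondr big_setU1 ?big_set1 ?inE.
by move=> z; rewrite inE.
Qed.

Lemma set2I_eq1 (T : finType) (x y : T) (A : {set T}) : x != y ->
  (#|[set x; y] :&: A| == 1) = (x \in A) (+) (y \in A).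
Proof. by move=> xy; rewrite card_set2I //; case: (x \in A); case: (y \in A). Qed.

Section Degrees.
Variables (T : finType) (C : {set T} -> nat).

Lemma cdeg_le_deg (F : {set {set T}}) v : cdeg C F v <= deg F v.
Proof.
rewrite /cdeg /deg cardE; apply: leq_trans (size_undup _) _.
by rewrite size_map.
Qed.

Lemma cdeg_le_add (F F1 F2 : {set {set T}}) v :
  inc_edges F v \subset F1 :|: F2 -> cdeg C F v <= cdeg C F1 v + cdeg C F2 v.
Proof.
move=> /subsetP sub; rewrite /cdeg -size_cat.
apply: uniq_leq_size; first exact: undup_uniq.
move=> c; rewrite mem_undup mem_cat !mem_undup => /mapP [e eF ->].
rewrite mem_enum in eF; have /setUP [eF1|eF2] := sub e eF;
  move: eF; rewrite inE => /andP [_ ve]; apply/orP; [left|right];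
  by apply: map_f; rewrite mem_enum inE ?eF1 ?eF2.
Qed.

Lemma sum_deg (X : {set {set T}}) : simple_graph X -> \sum_u deg X u = 2 * #|X|.
Proof.
move=> sX; transitivity (\sum_u \sum_(e in X | u \in e) 1).
  by apply: eq_bigr => u _; rewrite sum1dep_card.
rewrite (exchange_big_dep (fun e => e \in X)) => [|u e _ /andP[] //].
rewrite mulnC -sum_nat_const; apply: eq_bigr => e eX.
by rewrite sum1dep_card -(sX e eX); apply: eq_card => u; rewrite !inE eX.
Qed.

Lemma sum_deg_star (F : {set {set T}}) v : simple_graph F ->
  \sum_(u | u != v) deg (inc_edges F v) u = deg F v.
Proof.
move=> sF; have sFv : simple_graph (inc_edges F v).
  by move=> e; rewrite inE => /andP [/sF].
have degv : deg (inc_edges F v) v = deg F v.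
  by apply: eq_card => e; rewrite !inE -andbA andbb.
by have := sum_deg sFv; rewrite (bigD1 v) //= degv mul2n -addnn => /addnI.
Qed.

End Degrees.

Section Switching.
Variables (T : finType) (E : {set {set T}}) (C : {set T} -> nat).
Hypothesis sE : simple_graph E.

Definition cut (A : {set T}) : {set {set T}} := [set e in E | #|e :&: A| == 1].

Definition switch (v : T) (A : {set T}) : {set T} :=
  if v \in A then A :\ v else v |: A.

Definition potential (A : {set T}) : nat := \sum_u cdeg C (cut A) u + #|cut A|.

Lemma potentialE v A : potential A =
  cdeg C (cut A) v + \sum_(u | u != v) cdeg C (cut A) u + #|cut A|.
Proof. by rewrite /potential (bigD1 v). Qed.

Lemma mem_cut A e : (e \in cut A) = (e \in E) && (#|e :&: A| == 1).
Proof. by rewrite inE. Qed.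

Lemma cut_subset A : cut A \subset E.
Proof. by apply/subsetP => e; rewrite mem_cut => /andP []. Qed.

Lemma cut_bipartite A : bipartite (cut A).
Proof.
exists A => e; rewrite mem_cut => /andP [eE /eqP eA1].
by rewrite cardsD eA1 sE.
Qed.

Lemma in_switch w v A : (w \in switch v A) = (w \in A) (+) (w == v).
Proof.
rewrite /switch; have [->|wv] := eqVneq w v; case vA: (v \in A);
  by rewrite !inE ?eqxx ?vA ?(negbTE wv) ?addbF.
Qed.

Lemma cut_switch v A e : e \in E ->
  (e \in cut (switch v A)) = (e \in cut A) (+) (v \in e).
Proof.
move=> eE; have /cards2P [x [y [xy exy]]] : #|e| == 2 by rewrite sE.
rewrite !mem_cut eE exy !set2I_eq1 // !in_switch addbACA !inE; congr (_ (+) _).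
rewrite ![v == _]eq_sym; have [<-|_] := eqVneq x v; last by rewrite addFb.
by rewrite eq_sym (negbTE xy).
Qed.

Variables (v : T) (A : {set T}).
Local Notation H := (cut A).
Local Notation H' := (cut (switch v A)).

Lemma card_cut_switch : #|H'| + 2 * deg H v = #|H| + deg E v.
Proof.
set B : {set {set T}} := [set e | v \in (e : {set T})].
have inB e : (e \in B) = (v \in e) by rewrite inE.
have incE F : inc_edges F v = F :&: B by apply/setP => e; rewrite !inE.
have outH' : H' :\: B = H :\: B.
  apply/setP => e; rewrite !in_setD inB; case: (boolP (e \in E)) => eE.
    by rewrite cut_switch //; case: (v \in e); rewrite ?addbF.
  by rewrite !mem_cut (negbTE eE) !andbF.
have inH : (E :&: B) :&: H = H :&: B.
  by rewrite setIC setIA (setIidPl (cut_subset A)).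
have inH' : (E :&: B) :\: H = H' :&: B.
  apply/setP => e; rewrite in_setD !in_setI !inB; case: (boolP (e \in E)) => eE.
    by rewrite cut_switch //; case: (v \in e); case: (e \in H); rewrite ?andbF.
  by rewrite !mem_cut (negbTE eE).
rewrite /deg !incE -(cardsID B H) -(cardsID B H') outH'.
rewrite -(cardsID H (E :&: B)) inH inH'; lia.
Qed.

Lemma cdeg_switch_vertex : cdeg C E v <= cdeg C H v + cdeg C H' v.
Proof.
apply: cdeg_le_add; apply/subsetP => e; rewrite inE => /andP [eE ve].
by rewrite in_setU cut_switch // ve; case: (e \in H).
Qed.

Lemma sum_cdeg_switch_others :
  \sum_(u | u != v) cdeg C H u <= \sum_(u | u != v) cdeg C H' u + deg H v.
Proof.
have sH : simple_graph H by move=> e /(subsetP (cut_subset A)) /sE.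
rewrite -(sum_deg_star v sH) -big_split /=; apply: leq_sum => u _.
apply: leq_trans (leq_add (leqnn _) (cdeg_le_deg C _ u)).
apply: cdeg_le_add; apply/subsetP => e; rewrite inE => /andP [eH ue].
have eE : e \in E by apply: (subsetP (cut_subset A)).
by rewrite in_setU cut_switch // [e \in inc_edges _ _]inE eH; case: (v \in e).
Qed.

Lemma potential_switch :
  potential A + cdeg C E v + deg E v <=
  potential (switch v A) + 2 * cdeg C H v + 3 * deg H v.
Proof.
rewrite !(potentialE v); have := card_cut_switch; have := cdeg_switch_vertex.
have := sum_cdeg_switch_others; lia.
Qed.

End Switching.

Theorem lemma7 (T : finType) (E : {set {set T}}) (C : {set T} -> nat) :
  simple_graph E ->
  exists F : {set {set T}},
    [/\ F \subset E, bipartite F &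
        forall v : T, 2 * cdeg C F v + 3 * deg F v >= cdeg C E v + deg E v].
Proof.
move=> sE; have [A _ Amax] := @arg_maxnP _ set0 predT (potential E C) isT.
exists (cut E A); split; [exact: cut_subset | exact: cut_bipartite |].
move=> v; have := potential_switch C sE v A; have := Amax (switch v A) isT.
lia.
Qed.
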